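(* Let $H$ be an ASC-hypergraph and $M\subseteq H$. Then the following are equivalent: (a) every $M$-antichain misses $H$, and $|M|=|\bigcup H|$; (b) $M$ is a construction of $H$.
   Context: A hypergraph is a finite set $H$ of nonempty subsets of some finite set; its carrier is $\bigcup H$. For a family $F$ and set $Y$, $F_Y=\{X\in F\mid X\subseteq Y\}$. A hypergraph partition of $H$ is a partition $\{H_1,\dots,H_n\}$ ($n\ge0$) of the set $H$ with $\{\bigcup H_1,\dots,\bigcup H_n\}$ a partition of $\bigcup H$; $H$ is connected if it has exactly one hypergraph partition (the empty hypergraph is connected); the finest hypergraph partition is the unique one whose blocks are connected. $H$ is atomic if $\{x\}\in H$ for all $x\in\bigcup H$; saturated if $X_1,X_2\in H$ with $X_1\cap X_2\neq\emptyset$ imply $X_1\cup X_2\in H$. An ASC-hypergraph is one that is atomic, saturated and connected. Constructions of an atomic $H$, by induction on $|\bigcup H|$: (0) $\emptyset$ is the only construction of $\emptyset$; (1) if $|\bigcup H|\ge1$, $H$ connected, $x\in\bigcup H$, $K$ a construction of $H_{\bigcup H\setminus\{x\}}$, then $K\cup\{\bigcup H\}$ is a construction of $H$; (2) if $H$ is not connected with finest hypergraph partition $\{H_1,\dots,H_n\}$, $n\ge2$, and $K_i$ is a construction of $H_i$, then $K_1\cup\dots\cup K_n$ is a construction of $H$. For $M\subseteq H$, an $M$-antichain is a subset $S\subseteq M$ with $|S|\ge2$ such that no member of $S$ is a subset of another member of $S$; it misses $H$ when $\bigcup S\notin H$. *)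

From mathcomp Require Import all_boot.
Set Implicit Arguments. Unset Strict Implicit. Unset Printing Implicit Defensive.

Section Hyper.
Variable T : finType.

Definition hypergraph (H : {set {set T}}) : Prop := set0 \notin H.

Definition carrier (H : {set {set T}}) : {set T} := \bigcup_(X in H) X.

Definition restr (F : {set {set T}}) (Y : {set T}) : {set {set T}} :=
  [set X in F | X \subset Y].

(* P = {H_1,...,H_n} is a partition of the set H, and the family
   (\bigcup H_i)_i is a partition of \bigcup H (distinct blocks have
   distinct, hence disjoint, carriers). *)
Definition hpartition (P : {set {set {set T}}}) (H : {set {set T}}) : Prop :=
  [/\ partition P H,
      {in P &, injective carrier} &
      partition [set carrier Hi | Hi in P] (carrier H)].

Definition connected (H : {set {set T}}) : Prop :=
  exists! P, hpartition P H.

Definition finest_hpartition (P : {set {set {set T}}}) (H : {set {set T}}) : Prop :=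
  hpartition P H /\ (forall Hi, Hi \in P -> connected Hi).

Definition atomic (H : {set {set T}}) : Prop :=
  forall x, x \in carrier H -> [set x] \in H.

Definition saturated (H : {set {set T}}) : Prop :=
  forall X1 X2, X1 \in H -> X2 \in H -> X1 :&: X2 != set0 -> X1 :|: X2 \in H.

Definition ASC (H : {set {set T}}) : Prop :=
  [/\ atomic H, saturated H & connected H].

Inductive construction : {set {set T}} -> {set {set T}} -> Prop :=
| constr_empty : construction set0 set0
| constr_conn (H K : {set {set T}}) (x : T) :
    atomic H -> carrier H != set0 -> connected H -> x \in carrier H ->
    construction (restr H (carrier H :\ x)) K ->
    construction H (K :|: [set carrier H])
| constr_disc (H : {set {set T}}) (P : {set {set {set T}}})
    (Kf : {set {set T}} -> {set {set T}}) :
    atomic H -> ~ connected H -> finest_hpartition P H -> 2 <= #|P| ->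
    (forall Hi, Hi \in P -> construction Hi (Kf Hi)) ->
    construction H (\bigcup_(Hi in P) Kf Hi).

Definition antichain (M S : {set {set T}}) : Prop :=
  [/\ S \subset M, 2 <= #|S| &
      forall X Y, X \in S -> Y \in S -> X \subset Y -> X = Y].

Definition misses (H S : {set {set T}}) : Prop := carrier S \notin H.

End Hyper.

From mathcomp Require Import all_boot.
Set Implicit Arguments. Unset Strict Implicit. Unset Printing Implicit Defensive.

(* In a saturated hypergraph the maximal edges are pairwise disjoint, and the
   restrictions of H to them form the finest hypergraph partition; so H is
   connected iff its carrier is an edge.  The key to (a) => (b) is that an
   M-antichain missing H forces every Z in M to own a private point, lying in
   no smaller member of M: otherwise the maximal members of M strictly below Z
   would be an antichain with union Z.  Private points of distinct members are
   distinct (by saturation), whence #|M| <= #|carrier M|.  This bound shows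
   that the carrier U of a connected H lies in M, and removing a private point
   p of U reduces to (restr H (U :\ p), M :\ U); for a disconnected H it shows
   that M meets each component in exactly the right number of edges. *)

Section Hypergraphs.
Variable T : finType.
Implicit Types (H K M S Hi Hj : {set {set T}}) (X Y Z : {set T}) (P : {set {set {set T}}}).

Lemma carrierP H x : reflect (exists2 X, X \in H & x \in X) (x \in carrier H).
Proof. exact: bigcupP. Qed.

Lemma sub_carrier H X : X \in H -> X \subset carrier H.
Proof. by move=> XH; apply: (bigcup_sup X). Qed.

Lemma carrierS H K : H \subset K -> carrier H \subset carrier K.
Proof.
move=> HK; apply/subsetP=> x /carrierP [X XH xX].
by apply/carrierP; exists X => //; apply: (subsetP HK).
Qed.

Lemma carrier0 : carrier set0 = set0 :> {set T}.
Proof. exact: big_set0. Qed.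

Lemma carrier1 X : carrier [set X] = X.
Proof. exact: cover1. Qed.

Lemma carrier2 X Y : carrier [set X; Y] = X :|: Y.
Proof.
apply/setP=> x; rewrite inE; apply/carrierP/orP.
  by case=> W /set2P[]->; [left|right].
by case=> h; [exists X | exists Y]; rewrite ?inE ?eqxx ?orbT.
Qed.

Lemma hypergraphS H K : K \subset H -> hypergraph H -> hypergraph K.
Proof. by move=> KH; apply: contra; apply: (subsetP KH). Qed.

Lemma hypergraph_edge_neq0 H X : hypergraph H -> X \in H -> X != set0.
Proof. by move=> h0 XH; apply: contraNneq h0 => <-. Qed.

Lemma restr_sub H Y : restr H Y \subset H.
Proof. by apply/subsetP=> X; rewrite inE => /andP[]. Qed.

Lemma carrier_restr H Y : atomic H -> carrier (restr H Y) = Y :&: carrier H.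
Proof.
move=> aH; apply/setP=> x; rewrite inE; apply/carrierP/andP.
  case=> X; rewrite inE => /andP[XH XY] xX; split; first exact: (subsetP XY).
  by apply/carrierP; exists X.
case=> xY xH; exists [set x]; last by rewrite inE.
by rewrite inE aH // sub1set.
Qed.

Lemma carrier_restr_edge H Z : atomic H -> Z \in H -> carrier (restr H Z) = Z.
Proof. by move=> aH ZH; rewrite carrier_restr //; apply/setIidPl/sub_carrier. Qed.

Lemma carrier_restrD1 H x : atomic H ->
  carrier (restr H (carrier H :\ x)) = carrier H :\ x.
Proof. by move=> aH; rewrite carrier_restr //; apply/setIidPl/subsetDl. Qed.

Lemma atomic_restr H Y : atomic H -> atomic (restr H Y).
Proof.
move=> aH x; rewrite carrier_restr // inE => /andP[xY xH].
by rewrite inE aH // sub1set.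
Qed.

Lemma saturated_restr H Y : saturated H -> saturated (restr H Y).
Proof.
move=> sH X1 X2; rewrite !inE => /andP[X1H X1Y] /andP[X2H X2Y] ne.
by rewrite sH // subUset X1Y.
Qed.

Section HPartition.
Variables (P : {set {set {set T}}}) (H : {set {set T}}).
Hypotheses (h0 : hypergraph H) (hP : hpartition P H).

Lemma hpartition_sub Hi : Hi \in P -> Hi \subset H.
Proof.
case: hP => /and3P[/eqP <- _ _] _ _ HiP.
by apply/subsetP=> X XHi; apply/bigcupP; exists Hi.
Qed.

Lemma hpartition_cover X : X \in H -> exists2 Hi, Hi \in P & X \in Hi.
Proof. by case: hP => /and3P[/eqP <- _ _] _ _ /bigcupP. Qed.

Lemma hpartition_block_eq Hi Hj X :
  Hi \in P -> Hj \in P -> X \in Hi -> X \in Hj -> Hi = Hj.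
Proof.
case: hP => /and3P[_ /trivIsetP tI _] _ _ Pi Pj Xi Xj.
apply/eqP; apply: contraTT isT => ne.
by have /disjointFr/(_ Xi) := tI _ _ Pi Pj ne; rewrite Xj.
Qed.

(* Distinct blocks have disjoint carriers, and edges are nonempty. *)
Lemma hpartition_edge Hi X : Hi \in P -> X \in H -> X \subset carrier Hi -> X \in Hi.
Proof.
move=> Pi XH XC; have [Hj Pj Xj] := hpartition_cover XH.
have [x xX] := set0Pn _ (hypergraph_edge_neq0 h0 XH).
have xi := subsetP XC x xX.
have xj : x \in carrier Hj by apply/carrierP; exists X.
case: hP => _ inj /and3P[_ /trivIsetP tI _].
suff eqc : carrier Hi = carrier Hj by rewrite (inj _ _ Pi Pj eqc).
apply/eqP; apply: contraTT isT => ne.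
have := tI _ _ (imset_f (@carrier T) Pi) (imset_f (@carrier T) Pj) ne.
by move/disjointFr/(_ xi); rewrite xj.
Qed.

Lemma hypergraph_block Hi : Hi \in P -> hypergraph Hi.
Proof. by move=> Pi; apply: hypergraphS h0; apply: hpartition_sub. Qed.

Lemma atomic_block Hi : atomic H -> Hi \in P -> atomic Hi.
Proof.
move=> aH Pi x xi; apply: hpartition_edge => //.
  by apply: aH; apply: subsetP xi; apply/carrierS/hpartition_sub.
by rewrite sub1set.
Qed.

Lemma saturated_block Hi : saturated H -> Hi \in P -> saturated Hi.
Proof.
move=> sH Pi X1 X2 X1i X2i ne; have sub := hpartition_sub Pi.
apply: hpartition_edge => //; first by apply: sH => //; apply: (subsetP sub).
by rewrite subUset !sub_carrier.
Qed.

Lemma card_carrier_hpartition : #|carrier H| = \sum_(Hi in P) #|carrier Hi|.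
Proof. by case: hP => _ inj /card_partition ->; rewrite big_imset. Qed.

Lemma card_bigcup_hpartition (Kf : {set {set T}} -> {set {set T}}) :
  (forall Hi, Hi \in P -> Kf Hi \subset Hi) ->
  #|\bigcup_(Hi in P) Kf Hi| = \sum_(Hi in P) #|Kf Hi|.
Proof.
move=> sub; pose F Hi := if Hi \in P then Kf Hi else set0.
have -> : \bigcup_(Hi in P) Kf Hi = \bigcup_Hi F Hi by rewrite big_mkcond.
rewrite -sum1_card partition_disjoint_bigcup.
  rewrite [RHS]big_mkcond; apply: eq_bigr => Hi _; rewrite /F.
  by case: ifP => _; rewrite sum1_card // cards0.
move=> i j ne; rewrite /F; case: ifP => Pi; last by apply/pred0P => X; rewrite /= inE.
case: ifP => Pj; last by apply/pred0P => X; rewrite /= inE andbF.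
apply/pred0P => X /=; apply/andP=> [[Xi Xj]]; move: ne.
by rewrite (hpartition_block_eq Pi Pj (subsetP (sub _ Pi) _ Xi) (subsetP (sub _ Pj) _ Xj)) eqxx.
Qed.

Lemma setI_bigcup_hpartition M : M \subset H -> M = \bigcup_(Hi in P) (M :&: Hi).
Proof.
move=> MH; apply/setP=> X; apply/idP/bigcupP => [XM|[Hi _]]; last by rewrite inE => /andP[].
have [Hi PHi XHi] := hpartition_cover (subsetP MH X XM).
by exists Hi => //; rewrite inE XM.
Qed.

End HPartition.

Lemma hpartition1 H : hypergraph H -> H != set0 -> hpartition [set H] H.
Proof.
move=> h0 ne; split.
- by rewrite /partition cover1 eqxx trivIset1 inE eq_sym ne.
- by move=> A B; rewrite !inE => /eqP-> /eqP->.
rewrite imset_set1 /partition cover1 eqxx trivIset1 inE eq_sym.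
have [X XH] := set0Pn _ ne; have [x xX] := set0Pn _ (hypergraph_edge_neq0 h0 XH).
by apply/set0Pn; exists x; apply/carrierP; exists X.
Qed.

Lemma connected_carrier_edge H : hypergraph H -> carrier H \in H -> connected H.
Proof.
move=> h0 UH; have ne : H != set0 by apply/set0Pn; exists (carrier H).
exists [set H]; split; first exact: hpartition1.
move=> Q hQ; have [B QB UB] := hpartition_cover hQ UH.
have BH : B = H.
  apply/eqP; rewrite eqEsubset (hpartition_sub hQ QB) /=.
  apply/subsetP=> X XH; apply: (hpartition_edge h0 hQ QB XH).
  exact: subset_trans (sub_carrier XH) (sub_carrier UB).
apply/setP=> B'; rewrite inE; apply/eqP/idP => [->|QB']; first by rewrite -BH.
have [/and3P[_ _ n0] _ _] := hQ.
have [X XB'] : exists X, X \in B' by apply/set0Pn; apply: contraNneq n0 => <-.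
rewrite -BH; apply: (hpartition_block_eq hQ QB' QB XB').
by rewrite BH (subsetP (hpartition_sub hQ QB')).
Qed.

(** * Maximal edges and components *)

Definition maxsets H := [set Z | maxset (fun A => A \in H) Z].

Lemma maxsetsP H Z : Z \in maxsets H -> Z \in H /\ forall B, B \in H -> Z \subset B -> B = Z.
Proof. by rewrite inE => /maxsetP. Qed.

Lemma maxsets_sub H : maxsets H \subset H.
Proof. by apply/subsetP=> Z /maxsetsP[]. Qed.

Lemma maxsets_sup H X : X \in H -> exists2 Z, Z \in maxsets H & X \subset Z.
Proof.
move=> XH; have [Z mZ XZ] := maxset_exists (P := fun A => A \in H) XH.
by exists Z; rewrite ?inE.
Qed.

Lemma maxsets_eq H Z Z' : Z \in maxsets H -> Z' \in maxsets H -> Z \subset Z' -> Z = Z'.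
Proof. by move=> /maxsetsP[_ mZ] /maxsetsP[Z'H _] /(mZ _ Z'H)->. Qed.

Lemma carrier_maxsets H : carrier (maxsets H) = carrier H.
Proof.
apply/eqP; rewrite eqEsubset carrierS ?maxsets_sub //=.
apply/subsetP=> x /carrierP[X XH xX]; have [Z mZ XZ] := maxsets_sup XH.
by apply/carrierP; exists Z => //; apply: (subsetP XZ).
Qed.

Lemma saturated_maxsets_disjoint H Z Z' : saturated H ->
  Z \in maxsets H -> Z' \in maxsets H -> Z != Z' -> [disjoint Z & Z'].
Proof.
move=> sH /maxsetsP[ZH mZ] /maxsetsP[ZH' mZ'] ne; apply: contraNT ne.
rewrite -setI_eq0 => /(sH _ _ ZH ZH') UH.
by rewrite -(mZ _ UH (subsetUl _ _)) (mZ' _ UH (subsetUr _ _)).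
Qed.

Definition components H := [set restr H Z | Z in maxsets H].

Section Components.
Variable H : {set {set T}}.
Hypotheses (h0 : hypergraph H) (aH : atomic H) (sH : saturated H).

Lemma carrier_components : [set carrier Hi | Hi in components H] = maxsets H.
Proof.
rewrite -imset_comp; apply/setP=> Z; apply/imsetP/idP => [[Z' mZ' ->]|mZ].
  by rewrite /= carrier_restr_edge // (subsetP (maxsets_sub H)).
by exists Z => //=; rewrite carrier_restr_edge // (subsetP (maxsets_sub H)).
Qed.

Lemma restr_maxset_mem Z : Z \in maxsets H -> Z \in restr H Z.
Proof. by move=> mZ; rewrite inE (subsetP (maxsets_sub H)) ?subxx. Qed.

Lemma components_hpartition : hpartition (components H) H.
Proof.
split.
- apply/and3P; split.
  + rewrite cover_imset; apply/eqP/setP=> X; apply/bigcupP/idP.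
      by case=> Z _; rewrite inE => /andP[].
    by move=> XH; have [Z mZ XZ] := maxsets_sup XH; exists Z; rewrite // inE XH.
  + apply/trivIsetP => _ _ /imsetP[Z mZ ->] /imsetP[Z' mZ' ->] ne.
    have nZ : Z != Z' by apply: contraNneq ne => ->.
    have dZ := saturated_maxsets_disjoint sH mZ mZ' nZ.
    apply/pred0P => X /=; apply/negP; rewrite !inE => /andP[/andP[XH XZ] /andP[_ XZ']].
    have [x xX] := set0Pn _ (hypergraph_edge_neq0 h0 XH).
    by move/pred0P: dZ => /(_ x) /=; rewrite (subsetP XZ _ xX) (subsetP XZ' _ xX).
  + by apply/imsetP=> [[Z mZ e]]; move: (restr_maxset_mem mZ); rewrite -e inE.
- move=> _ _ /imsetP[Z mZ ->] /imsetP[Z' mZ' ->].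
  by rewrite !carrier_restr_edge ?(subsetP (maxsets_sub H)) // => ->.
rewrite carrier_components /partition -[cover _]/(carrier _) carrier_maxsets eqxx /=.
apply/andP; split; last by apply: contra h0; apply: (subsetP (maxsets_sub H)).
by apply/trivIsetP => Z Z' mZ mZ'; apply: saturated_maxsets_disjoint sH mZ mZ'.
Qed.

Lemma components_finest : finest_hpartition (components H) H.
Proof.
split; first exact: components_hpartition.
move=> _ /imsetP[Z mZ ->]; apply: connected_carrier_edge.
  exact: hypergraphS (restr_sub _ _) h0.
by rewrite carrier_restr_edge ?restr_maxset_mem ?(subsetP (maxsets_sub H)).
Qed.

Lemma card_components : #|components H| = #|maxsets H|.
Proof.
apply: card_in_imset => Z Z' mZ mZ' e.
by rewrite -(carrier_restr_edge aH (subsetP (maxsets_sub H) _ mZ)) e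
           carrier_restr_edge // (subsetP (maxsets_sub H)).
Qed.

Lemma components_card_gt1 : H != set0 -> carrier H \notin H -> 1 < #|components H|.
Proof.
move=> ne nU; rewrite card_components.
have [X XH] := set0Pn _ ne; have [Z mZ _] := maxsets_sup XH.
have : ~~ (carrier H \subset Z).
  apply: contra nU => sU; suff <- : Z = carrier H by apply: (subsetP (maxsets_sub H)).
  by apply/eqP; rewrite eqEsubset sU sub_carrier ?(subsetP (maxsets_sub H)).
case/subsetPn => x; rewrite -carrier_maxsets => /carrierP[Z' mZ' xZ'] xZ.
have nZ : Z' != Z by apply: contraNneq xZ => <-.
apply: (@leq_trans #|[set Z; Z']|); first by rewrite cards2 eq_sym nZ.
by apply: subset_leq_card; apply/subsetP=> W /set2P[]->.
Qed.

Lemma connected_carrier_mem : H != set0 -> connected H -> carrier H \in H.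
Proof.
move=> ne [P0 [_ uP0]]; apply/negPn/negP => /(components_card_gt1 ne).
by rewrite -(uP0 _ components_hpartition) (uP0 _ (hpartition1 h0 ne)) cards1.
Qed.

Lemma card_carrier_component Hi : 1 < #|components H| ->
  Hi \in components H -> #|carrier Hi| < #|carrier H|.
Proof.
move=> c2 PHi; have : 0 < #|components H :\ Hi| by move: c2; rewrite (cardsD1 Hi) PHi.
case/card_gt0P => Hj; rewrite !inE => /andP[nji PHj].
case/imsetP: PHi nji => Z mZ -> ; case/imsetP: PHj => Z' mZ' -> nji.
have [ZH _] := maxsetsP mZ; have [ZH' _] := maxsetsP mZ'.
rewrite carrier_restr_edge //; apply: proper_card; apply/properP; split.
  exact: sub_carrier.
have [x xZ'] := set0Pn _ (hypergraph_edge_neq0 h0 ZH').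
exists x; first by apply/carrierP; exists Z'.
have nZ : Z' != Z by apply: contraNneq nji => ->.
by move/pred0P: (saturated_maxsets_disjoint sH mZ' mZ nZ) => /(_ x) /=; rewrite xZ' /= => ->.
Qed.

End Components.

(** * Antichains and private points *)

Definition antichains_miss H M := forall S, antichain M S -> misses H S.

Lemma antichains_missS H M M' : M' \subset M -> antichains_miss H M -> antichains_miss H M'.
Proof. by move=> sM ac S [SM' c2 aS]; apply: ac; split=> //; apply: subset_trans sM. Qed.

Lemma antichains_miss_sub H H' M : H' \subset H -> antichains_miss H M -> antichains_miss H' M.
Proof. by move=> sH ac S /ac; apply: contra; apply: (subsetP sH). Qed.

Lemma antichain2 M X Y : X \in M -> Y \in M ->
  ~~ (X \subset Y) -> ~~ (Y \subset X) -> antichain M [set X; Y].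
Proof.
move=> XM YM nXY nYX; have nXY' : X != Y by apply: contraNneq nXY => ->.
split; first by apply/subsetP=> W /set2P[]->.
  by rewrite cards2 nXY'.
by move=> A B /set2P[]-> /set2P[]-> //; rewrite ?(negbTE nXY) ?(negbTE nYX).
Qed.

Lemma antichain_notin_sup M S Y : antichain M S ->
  (forall X, X \in M -> X \subset Y) -> Y \notin S.
Proof.
move=> [SM c2 aS] sub; apply/negP => YS.
have : 0 < #|S :\ Y| by move: c2; rewrite (cardsD1 Y) YS.
case/card_gt0P => X; rewrite !inE => /andP[nXY XS].
by move/eqP: (aS X Y XS YS (sub X (subsetP SM X XS))); rewrite (negbTE nXY).
Qed.

Definition private_points M Z := Z :\: carrier [set Y in M | Y \proper Z].

Lemma private_pointsP M Z p : p \in private_points M Z ->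
  p \in Z /\ forall Y, Y \in M -> Y \proper Z -> p \notin Y.
Proof.
rewrite inE => /andP[np pZ]; split=> // Y YM YZ; apply: contraNN np => pY.
by apply/carrierP; exists Y; rewrite ?inE ?YM.
Qed.

Section PrivatePoints.
Variables H M : {set {set T}}.
Hypotheses (h0 : hypergraph H) (MH : M \subset H) (ac : antichains_miss H M).

Lemma private_points_neq0 Z : Z \in M -> private_points M Z != set0.
Proof.
move=> ZM; apply/negP; rewrite setD_eq0 => Zsub.
pose C := maxsets [set Y in M | Y \proper Z].
have CZ : carrier C = Z.
  apply/eqP; rewrite eqEsubset carrier_maxsets Zsub andbT.
  by apply/subsetP=> x /carrierP[Y]; rewrite inE => /andP[_ /proper_sub/subsetP]; apply.
have ZH := subsetP MH Z ZM.
have C2 : 1 < #|C|.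
  rewrite ltnNge leq_eqVlt ltnS leqn0 cards_eq0; apply/negP => /orP[/cards1P[Y CY]|/eqP C0].
    have : Y \in [set Y in M | Y \proper Z] by apply: (subsetP (maxsets_sub _)); rewrite -/C CY set11.
    by rewrite inE -CZ CY carrier1 properxx andbF.
  by move: (hypergraph_edge_neq0 h0 ZH); rewrite -CZ C0 carrier0 eqxx.
have aC : antichain M C.
  split=> //; first by apply: subset_trans (maxsets_sub _) _; apply/subsetP=> Y; rewrite inE => /andP[].
  move=> X Y XC YC; exact: maxsets_eq XC YC.
by move: (ac aC); rewrite /misses CZ ZH.
Qed.

Lemma private_points_disjoint Z Z' : saturated H -> Z \in M -> Z' \in M -> Z != Z' ->
  [disjoint private_points M Z & private_points M Z'].
Proof.
move=> sH ZM Z'M nZ; apply/pred0P => p /=; apply/negP => /andP[pZ pZ'].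
have [pinZ /(_ _ Z'M) nZ'] := private_pointsP pZ.
have [pinZ' /(_ _ ZM) nZ''] := private_pointsP pZ'.
case sZZ': (Z \subset Z').
  by move: nZ''; rewrite properEneq nZ sZZ' pinZ => /(_ isT).
case sZ'Z: (Z' \subset Z).
  by move: nZ'; rewrite properEneq eq_sym nZ sZ'Z pinZ' => /(_ isT).
move: (ac (antichain2 ZM Z'M (negbT sZZ') (negbT sZ'Z))).
rewrite /misses carrier2 sH ?(subsetP MH) //.
by apply/set0Pn; exists p; rewrite inE pinZ pinZ'.
Qed.

Lemma card_le_carrier : saturated H -> #|M| <= #|carrier M|.
Proof.
move=> sH; pose P := [set private_points M Z | Z in M].
have inj : {in M &, injective (private_points M)}.
  move=> Z Z' ZM Z'M e; apply/eqP; apply: contraTT (private_points_neq0 Z'M) => nZ.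
  by rewrite negbK -[X in X == _]setIid -{1}e setI_eq0 private_points_disjoint.
have trivP : trivIset P.
  apply/trivIsetP=> _ _ /imsetP[Z ZM ->] /imsetP[Z' Z'M ->] ne.
  by apply: private_points_disjoint => //; apply: contraNneq ne => ->.
rewrite -(card_in_imset inj) -/P; apply: (@leq_trans (\sum_(A in P) #|A|)).
  rewrite -sum1_card; apply: leq_sum => _ /imsetP[Z ZM ->].
  by rewrite card_gt0 private_points_neq0.
have /eqP <- : #|cover P| == \sum_(A in P) #|A| by rewrite (leq_card_cover P).2.
apply: subset_leq_card.
apply/bigcupsP=> _ /imsetP[Z ZM ->]; apply: subset_trans (subsetDl _ _) _.
exact: sub_carrier.
Qed.

End PrivatePoints.

(** * Soundness of constructions *)

Lemma antichains_miss_setU1_carrier H K Y : atomic H ->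
  K \subset restr H Y -> antichains_miss (restr H Y) K ->
  antichains_miss H (carrier H |: K).
Proof.
move=> aH KH ac S aS.
have US : carrier H \notin S.
  apply: (antichain_notin_sup aS) => X; rewrite in_setU1 => /predU1P[->//|XK].
  exact/sub_carrier/(subsetP (restr_sub H Y))/(subsetP KH).
case: aS => SUK c2 aS; have SK : S \subset K.
  apply/subsetP=> X XS; move: (subsetP SUK X XS); rewrite in_setU1 => /predU1P[eX|//].
  by move: US; rewrite -eX XS.
have := ac S (And3 SK c2 aS); apply: contra => cSH.
rewrite inE cSH; apply: subset_trans (carrierS SK) _.
by apply: subset_trans (carrierS KH) _; rewrite carrier_restr ?subsetIl.
Qed.

Lemma antichains_miss_bigcup P H (Kf : {set {set T}} -> {set {set T}}) :
  hypergraph H -> hpartition P H ->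
  (forall Hi, Hi \in P -> Kf Hi \subset Hi /\ antichains_miss Hi (Kf Hi)) ->
  antichains_miss H (\bigcup_(Hi in P) Kf Hi).
Proof.
move=> h0 hP IH S [SK c2 aS]; apply/negP => cSH.
have [Hj PHj cSj] := hpartition_cover hP cSH.
have SKj : S \subset Kf Hj.
  apply/subsetP=> X XS; have /bigcupP[Hi PHi XKi] := subsetP SK X XS.
  have XHi := subsetP (IH _ PHi).1 X XKi.
  have Xj : X \in Hj.
    apply: (hpartition_edge h0 hP PHj (subsetP (hpartition_sub hP PHi) X XHi)).
    exact: subset_trans (sub_carrier XS) (sub_carrier cSj).
  by rewrite (hpartition_block_eq hP PHj PHi Xj XHi).
by move: ((IH _ PHj).2 S (And3 SKj c2 aS)); rewrite /misses cSj.
Qed.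

Lemma construction_sound H K : construction H K -> hypergraph H -> saturated H ->
  [/\ K \subset H, #|K| = #|carrier H| & antichains_miss H K].
Proof.
elim=> {H K} [|H K x aH ne cH xU _ IH|H P Kf aH _ [hP _] _ _ IH] h0 sH.
- split; rewrite ?carrier0 ?sub0set ?cards0 // => S [SK c2 _].
  by move: (leq_trans c2 (subset_leq_card SK)); rewrite cards0.
- have UH : carrier H \in H.
    by apply: connected_carrier_mem => //; apply: contraNneq ne => ->; rewrite carrier0.
  have [KH' cK acK] := IH (hypergraphS (restr_sub _ _) h0) (saturated_restr sH).
  have UK : carrier H \notin K.
    apply/negP => /(subsetP KH'); rewrite inE => /andP[_ /subsetP/(_ x xU)].
    by rewrite !inE eqxx.
  rewrite setUC; split; last exact: antichains_miss_setU1_carrier acK.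
    by rewrite subUset sub1set UH (subset_trans KH' (restr_sub _ _)).
  by rewrite cardsU1 UK cK carrier_restrD1 // [in RHS](cardsD1 x) xU.
- have IH' Hi : Hi \in P -> [/\ Kf Hi \subset Hi, #|Kf Hi| = #|carrier Hi|
      & antichains_miss Hi (Kf Hi)].
    move=> PHi; apply: IH PHi (hypergraph_block h0 hP PHi) (saturated_block h0 hP sH PHi).
  split.
  + apply/bigcupsP=> Hi PHi; have [KHi _ _] := IH' _ PHi.
    exact: subset_trans KHi (hpartition_sub hP PHi).
  + rewrite (card_bigcup_hpartition hP) => [|Hi /IH'[]//].
    by rewrite (card_carrier_hpartition hP); apply: eq_bigr => Hi /IH'[].
  by apply: antichains_miss_bigcup hP _ => // Hi /IH'[].
Qed.

(** * Completeness *)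

Lemma sum_leq_eq (I : finType) (A : pred I) (a b : I -> nat) :
  (forall i, A i -> a i <= b i) -> \sum_(i | A i) a i = \sum_(i | A i) b i ->
  forall i, A i -> a i = b i.
Proof.
move=> le e i Ai.
have := (leqif_sum (C := fun i => a i == b i) (fun i Ai => leqif_eq (le i Ai))).2.
by rewrite e eqxx => /esym/forall_inP/(_ i Ai)/eqP.
Qed.

Section CompletenessStep.
Variables H M : {set {set T}}.
Hypotheses (h0 : hypergraph H) (aH : atomic H) (sH : saturated H)
  (MH : M \subset H) (ac : antichains_miss H M) (cM : #|M| = #|carrier H|).
Hypothesis IH : forall H' M', #|carrier H'| < #|carrier H| ->
  hypergraph H' -> atomic H' -> saturated H' -> M' \subset H' ->
  antichains_miss H' M' -> #|M'| = #|carrier H'| -> construction H' M'.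

(* Adding carrier H to M keeps all antichains missing H, so card_le_carrier
   would give #|M| < #|carrier H|. *)
Lemma carrier_edge_mem : carrier H \in H -> carrier H \in M.
Proof.
move=> UH; apply/negPn/negP => nUM.
have MH' : carrier H |: M \subset H by rewrite subUset sub1set UH MH.
have ac' : antichains_miss H (carrier H |: M).
  move=> S aS; have := antichain_notin_sup aS (fun X XM => sub_carrier (subsetP MH' X XM)).
  case: aS => SK c2 aS nUS; apply: ac; split=> //; apply/subsetP=> Y YS.
  move: (subsetP SK Y YS); rewrite in_setU1 => /predU1P[eY|//].
  by move: nUS; rewrite -eY YS.
have := card_le_carrier h0 MH' ac' sH.
by rewrite cardsU1 nUM cM add1n ltnNge (subset_leq_card (carrierS MH')).
Qed.

Lemma construction_complete_connected : carrier H != set0 -> carrier H \in H ->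
  construction H M.
Proof.
move=> ne UH; set U := carrier H; have UM := carrier_edge_mem UH.
have [p pU] := set0Pn _ (private_points_neq0 h0 MH ac UM).
have [{}pU privp] := private_pointsP pU.
have MU : M :\ U \subset restr H (U :\ p).
  apply/subsetP=> Y; rewrite !inE => /andP[nYU YM]; have YH := subsetP MH Y YM.
  rewrite YH; apply/subsetP=> y yY; rewrite !inE (subsetP (sub_carrier YH) y yY) andbT.
  apply: contraTneq yY => ->; apply: (privp Y) => //.
  by rewrite properEneq nYU sub_carrier.
have := constr_conn aH ne (connected_carrier_edge h0 UH) pU (K := M :\ U).
rewrite setUC setD1K //; apply; apply: IH.
- by rewrite carrier_restrD1 // [in X in _ < X](cardsD1 p) pU.
- exact: hypergraphS (restr_sub _ _) h0.
- exact: atomic_restr.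
- exact: saturated_restr.
- exact: MU.
- exact: antichains_miss_sub (restr_sub _ _) (antichains_missS (subsetDl _ _) ac).
- by move: (cardsD1 U M) (cardsD1 p U); rewrite UM pU cM carrier_restrD1 // => -> /addnI.
Qed.

Lemma construction_complete_split : H != set0 -> carrier H \notin H ->
  construction H M.
Proof.
move=> ne nUH; have hP := components_hpartition h0 aH sH.
have c2 := components_card_gt1 aH ne nUH.
have acI Hi : Hi \in components H -> antichains_miss Hi (M :&: Hi).
  move=> PHi; apply: antichains_miss_sub (hpartition_sub hP PHi) _.
  exact: antichains_missS (subsetIl _ _) ac.
have leI Hi : Hi \in components H -> #|M :&: Hi| <= #|carrier Hi|.
  move=> PHi; apply: leq_trans (card_le_carrier (hypergraph_block h0 hP PHi) (subsetIr _ _)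
    (acI _ PHi) (saturated_block h0 hP sH PHi)) _.
  exact: subset_leq_card (carrierS (subsetIr _ _)).
have eqI : forall Hi, Hi \in components H -> #|M :&: Hi| = #|carrier Hi|.
  apply: sum_leq_eq => //.
  rewrite -(card_carrier_hpartition hP) -cM [in RHS](setI_bigcup_hpartition hP MH).
  by rewrite (card_bigcup_hpartition hP) // => Hi _; apply: subsetIr.
have ncH : ~ connected H by move/(connected_carrier_mem h0 aH sH ne); apply/negP.
rewrite (setI_bigcup_hpartition hP MH).
apply: (constr_disc aH ncH (components_finest h0 aH sH) c2) => Hi PHi.
exact (IH (card_carrier_component h0 aH sH c2 PHi) (hypergraph_block h0 hP PHi)
  (atomic_block h0 hP aH PHi) (saturated_block h0 hP sH PHi) (subsetIr M Hi)
  (acI _ PHi) (eqI _ PHi)).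
Qed.

End CompletenessStep.

Lemma construction_carrier0 H M : hypergraph H -> carrier H = set0 ->
  #|M| = #|carrier H| -> construction H M.
Proof.
move=> h0 U0; have -> : H = set0.
  apply/eqP; rewrite -subset0; apply/subsetP=> X XH.
  by move: (sub_carrier XH) (hypergraph_edge_neq0 h0 XH); rewrite U0 subset0 => ->.
by rewrite carrier0 cards0 => /eqP; rewrite cards_eq0 => /eqP->; apply: constr_empty.
Qed.

Lemma construction_complete H M : hypergraph H -> atomic H -> saturated H ->
  M \subset H -> antichains_miss H M -> #|M| = #|carrier H| -> construction H M.
Proof.
move: {2}#|carrier H| (leqnn #|carrier H|) => n.
elim: n H M => [|n IHn] H M cn h0 aH sH MH ac cM.
  by apply: construction_carrier0 => //; apply/eqP; rewrite -cards_eq0 -leqn0.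
have [U0|ne] := eqVneq (carrier H) set0; first exact: construction_carrier0.
have IH H' M' (lt : #|carrier H'| < #|carrier H|) := IHn H' M' (leq_trans lt cn).
have [UH|nUH] := boolP (carrier H \in H).
  exact: construction_complete_connected IH ne UH.
apply: construction_complete_split nUH => //.
by apply: contraNneq ne => ->; rewrite carrier0.
Qed.

End Hypergraphs.

Theorem proposition6p11 (T : finType) (H M : {set {set T}}) :
  hypergraph H -> ASC H -> M \subset H ->
  ((forall S, antichain M S -> misses H S) /\ #|M| = #|carrier H|)
  <-> construction H M.
Proof.
move=> h0 [aH sH _] MH; split.
- by case=> ac cM; apply: construction_complete.
- by move=> c; have [_ cM ac] := construction_sound c h0 sH.
Qed.
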